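(* Let $H_1,H_2$ be vertex-disjoint graphs, let $Y_1$ be a minimal blocking set of $H_1$ with $|Y_1|\ge2$, let $Y_2$ be a minimal blocking set of $H_2$, and let $y_1\in Y_1$, $y_2\in Y_2$. Let $H$ be the graph with vertex set $V(H_1)\cup V(H_2)$ and edge set $E(H_1)\cup E(H_2)\cup\{\{y_1,y_2\}\}$. Then $\mathrm{OPT}(H)=\mathrm{OPT}(H_1)+\mathrm{OPT}(H_2)$ and $(Y_1\cup Y_2)\setminus\{y_1,y_2\}$ is a minimal blocking set of $H$.
   Context: $\mathrm{OPT}(G)$ is the minimum vertex cover size. $Y\subseteq V(G)$ is a blocking set of $G$ if no vertex cover of $G$ of size $\mathrm{OPT}(G)$ contains $Y$; minimal if no proper subset is a blocking set. *)

From mathcomp Require Import all_boot.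
Set Implicit Arguments. Unset Strict Implicit. Unset Printing Implicit Defensive.

Definition simple_graph (T : finType) (e : rel T) : Prop :=
  symmetric e /\ irreflexive e.

Definition vertex_cover (T : finType) (e : rel T) (C : {set T}) : bool :=
  [forall x, forall y, e x y ==> (x \in C) || (y \in C)].

(* OPT(G): minimum size of a vertex cover (setT is always a cover) *)
Definition OPT (T : finType) (e : rel T) : nat :=
  #|[arg min_(C < [set: T] | vertex_cover e C) #|C|]|.

Definition blocking (T : finType) (e : rel T) (Y : {set T}) : Prop :=
  forall C : {set T}, vertex_cover e C -> #|C| = OPT e -> ~ (Y \subset C).

Definition minimal_blocking (T : finType) (e : rel T) (Y : {set T}) : Prop :=
  blocking e Y /\ forall Z : {set T}, Z \proper Y -> ~ blocking e Z.

Definition join_edge (T1 T2 : finType) (e1 : rel T1) (e2 : rel T2)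
  (y1 : T1) (y2 : T2) : rel (T1 + T2)%type :=
  fun u v => match u, v with
  | inl a, inl b => e1 a b
  | inr a, inr b => e2 a b
  | inl a, inr b => (a == y1) && (b == y2)
  | inr a, inl b => (a == y2) && (b == y1)
  end.

(* A set of
   vertices of H is the same thing as a pair of sets (C1, C2), one in each
   part ([glue] below), and such a glued set covers H exactly when C1 covers
   H1, C2 covers H2 and C1 or C2 meets the new edge ([join_cover_glue]).
   Hence OPT(H) >= OPT(H1) + OPT(H2), with equality as soon as y1 lies in a
   minimum cover of H1 ([OPT_join_edge]); this is where |Y1| >= 2 enters, since
   then {y1} is a proper, hence non-blocking, subset of Y1.  Under this
   equality the minimum covers of H are exactly the glued pairs of minimum
   covers meeting the edge ([min_cover_glue]).  With that description,
   Y = (Y1 \ y1) + (Y2 \ y2) is blocking because a minimum cover containing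
   it contains y1 or y2, hence all of Y1 or all of Y2 ([join_blocking]); and
   every proper subset of Y misses an element on one side, which lets us use
   the minimality of Y1 and Y2 to extend it to a minimum cover of H
   ([join_minimal]). *)

From mathcomp Require Import all_boot zify.
Set Implicit Arguments. Unset Strict Implicit. Unset Printing Implicit Defensive.

Section VertexCovers.
Variables (T : finType) (e : rel T).

Definition min_cover (C : {set T}) : Prop := vertex_cover e C /\ #|C| = OPT e.

Lemma vertex_cover_setT : vertex_cover e [set: T].
Proof. by apply/forallP=> x; apply/forallP=> y; rewrite in_setT implybT. Qed.

Lemma OPT_le_cover (C : {set T}) : vertex_cover e C -> OPT e <= #|C|.
Proof.
rewrite /OPT; case: arg_minnP; first exact: vertex_cover_setT.
by move=> D _ minD /minD.
Qed.

Lemma min_cover_exists : exists C, min_cover C.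
Proof.
rewrite /min_cover /OPT; case: arg_minnP; first exact: vertex_cover_setT.
by move=> C covC _; exists C.
Qed.

Lemma not_blocking_cover (Z : {set T}) :
  ~ blocking e Z -> exists2 C, min_cover C & Z \subset C.
Proof.
move=> notblk.
have [/existsP [C /and3P [covC /eqP cardC subZ]] | /existsPn none] :=
  boolP [exists C, [&& vertex_cover e C, #|C| == OPT e & Z \subset C]].
  by exists C.
by case: notblk => C covC cardC subZ; move: (none C); rewrite covC cardC eqxx subZ.
Qed.

Lemma minimal_blocking_proper (Y Z : {set T}) :
  minimal_blocking e Y -> Z \proper Y -> exists2 C, min_cover C & Z \subset C.
Proof. by move=> [_ minY] /minY; apply: not_blocking_cover. Qed.

End VertexCovers.

Lemma proper_setU1 (T : finType) (Y W : {set T}) (y : T) :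
  y \in Y -> W \proper Y :\ y -> y |: W \proper Y.
Proof.
move=> yY /properP [subW [a aY aW]]; apply/properP; split.
  by rewrite -(setD1K yY) setUS.
exists a; first by move: aY; rewrite inE => /andP [].
by move: aY aW; rewrite !inE => /andP [/negbTE ->].
Qed.

Section Glue.
Variables T1 T2 : finType.

Definition lpart (C : {set T1 + T2}) : {set T1} := [set a | inl a \in C].
Definition rpart (C : {set T1 + T2}) : {set T2} := [set b | inr b \in C].
Definition glue (C1 : {set T1}) (C2 : {set T2}) : {set T1 + T2} :=
  (@inl T1 T2) @: C1 :|: (@inr T1 T2) @: C2.

Lemma in_glue (C1 : {set T1}) (C2 : {set T2}) (x : T1 + T2) :
  (x \in glue C1 C2) = match x with inl a => a \in C1 | inr b => b \in C2 end.
Proof.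
rewrite /glue inE; case: x => [a | b].
  rewrite mem_imset; last by move=> ? ? [].
  by case: (a \in C1) => //=; apply/imsetP => -[].
rewrite mem_imset; last by move=> ? ? [].
by rewrite orbC; case: (b \in C2) => //=; apply/imsetP => -[].
Qed.

Lemma glueK (C : {set T1 + T2}) : glue (lpart C) (rpart C) = C.
Proof. by apply/setP => x; rewrite in_glue; case: x => ?; rewrite inE. Qed.

Lemma card_glue (C1 : {set T1}) (C2 : {set T2}) :
  #|glue C1 C2| = #|C1| + #|C2|.
Proof.
rewrite /glue cardsU !card_imset; try by move=> ? ? [].
suff -> : (@inl T1 T2) @: C1 :&: (@inr T1 T2) @: C2 = set0 by rewrite cards0 subn0.
by apply/setP => x; rewrite !inE; apply/andP => -[/imsetP [a _ ->] /imsetP [b _]].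
Qed.

Lemma subset_glue (A1 C1 : {set T1}) (A2 C2 : {set T2}) :
  (glue A1 A2 \subset glue C1 C2) = (A1 \subset C1) && (A2 \subset C2).
Proof.
apply/subsetP/andP => [sub | [/subsetP sub1 /subsetP sub2]].
  split; apply/subsetP => a aA.
    by have := sub (inl a); rewrite !in_glue; apply.
  by have := sub (inr a); rewrite !in_glue; apply.
by case=> a; rewrite !in_glue; [apply: sub1 | apply: sub2].
Qed.

Lemma proper_glue (A1 B1 : {set T1}) (A2 B2 : {set T2}) :
  (glue A1 A2 \proper glue B1 B2) =
  [&& A1 \subset B1, A2 \subset B2 & (A1 \proper B1) || (A2 \proper B2)].
Proof.
rewrite !properE !subset_glue.
by case: (A1 \subset B1); case: (A2 \subset B2); case: (B1 \subset A1);
  case: (B2 \subset A2).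
Qed.

Lemma glue_setD1 (A1 : {set T1}) (A2 : {set T2}) (a1 : T1) (a2 : T2) :
  glue A1 A2 :\: [set inl a1; inr a2] = glue (A1 :\ a1) (A2 :\ a2).
Proof. by apply/setP => x; rewrite inE !in_glue; case: x => a; rewrite !inE /= ?orbF. Qed.

End Glue.

Section JoinEdge.
Variables (T1 T2 : finType) (e1 : rel T1) (e2 : rel T2) (y1 : T1) (y2 : T2).
Local Notation e := (join_edge e1 e2 y1 y2).

Lemma join_cover_glue (C1 : {set T1}) (C2 : {set T2}) :
  vertex_cover e (glue C1 C2) =
  [&& vertex_cover e1 C1, vertex_cover e2 C2 & (y1 \in C1) || (y2 \in C2)].
Proof.
apply/idP/and3P => [cov | [cov1 cov2 edge]].
  have cov_at u v : e u v -> (u \in glue C1 C2) || (v \in glue C1 C2).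
    exact: implyP (forallP (forallP cov u) v).
  split; last by have := cov_at (inl y1) (inr y2); rewrite !in_glue /= !eqxx; apply.
    by apply/forallP=> a; apply/forallP=> b; apply/implyP=> /(cov_at (inl a) (inl b));
    rewrite !in_glue.
  by apply/forallP=> a; apply/forallP=> b; apply/implyP=> /(cov_at (inr a) (inr b));
    rewrite !in_glue.
apply/forallP=> u; apply/forallP=> v; apply/implyP; rewrite !in_glue.
case: u v => [a | a] [b | b] /=.
- exact: implyP (forallP (forallP cov1 a) b).
- by case/andP=> /eqP -> /eqP ->.
- by case/andP=> /eqP -> /eqP ->; rewrite orbC.
- exact: implyP (forallP (forallP cov2 a) b).
Qed.

Lemma OPT_join_edge (C1 : {set T1}) :
  min_cover e1 C1 -> y1 \in C1 -> OPT e = OPT e1 + OPT e2.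
Proof.
move=> [cov1 card1] y1C1; apply/eqP; rewrite eqn_leq; apply/andP; split.
  have [C2 [cov2 card2]] := min_cover_exists e2.
  rewrite -card1 -card2 -card_glue; apply: OPT_le_cover.
  by rewrite join_cover_glue cov1 cov2 y1C1.
have [C [covC <-]] := min_cover_exists e.
move: covC; rewrite -(glueK C) card_glue join_cover_glue => /and3P [covL covR _].
by rewrite leq_add // OPT_le_cover.
Qed.

Section AdditiveOPT.
Hypothesis OPT_add : OPT e = OPT e1 + OPT e2.

Lemma min_cover_glue (C1 : {set T1}) (C2 : {set T2}) :
  min_cover e (glue C1 C2) <->
  [/\ min_cover e1 C1, min_cover e2 C2 & (y1 \in C1) || (y2 \in C2)].
Proof.
rewrite /min_cover join_cover_glue card_glue OPT_add; split.
  move=> [/and3P [cov1 cov2 edge] card12].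
  have le1 := OPT_le_cover cov1; have le2 := OPT_le_cover cov2.
  by split; rewrite // (cov1, cov2); lia.
by move=> [[cov1 ->] [cov2 ->] edge]; rewrite cov1 cov2 edge.
Qed.

Lemma glue_not_blocking (W1 C1 : {set T1}) (W2 C2 : {set T2}) :
  min_cover e1 C1 -> min_cover e2 C2 -> (y1 \in C1) || (y2 \in C2) ->
  W1 \subset C1 -> W2 \subset C2 -> ~ blocking e (glue W1 W2).
Proof.
move=> min1 min2 edge sub1 sub2 blk.
have [covC cardC] : min_cover e (glue C1 C2) by apply/min_cover_glue.
by apply: (blk _ covC cardC); rewrite subset_glue sub1 sub2.
Qed.

Variables (Y1 : {set T1}) (Y2 : {set T2}).
Hypotheses (y1Y1 : y1 \in Y1) (y2Y2 : y2 \in Y2).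

(* A minimum cover containing Y contains y1 or y2, hence all of Y1 or all
   of Y2, contradicting that these are blocking. *)
Lemma join_blocking :
  blocking e1 Y1 -> blocking e2 Y2 -> blocking e (glue (Y1 :\ y1) (Y2 :\ y2)).
Proof.
move=> blk1 blk2 C covC cardC; rewrite -(glueK C) subset_glue => /andP [sub1 sub2].
have /min_cover_glue [[cov1 card1] [cov2 card2] /orP [y1C | y2C]] :
    min_cover e (glue (lpart C) (rpart C)) by rewrite glueK.
- by apply: (blk1 _ cov1 card1); rewrite -(setD1K y1Y1) subUset sub1set y1C.
- by apply: (blk2 _ cov2 card2); rewrite -(setD1K y2Y2) subUset sub1set y2C.
Qed.

(* Every proper subset of Y misses an element of Y1 \ y1 or of Y2 \ y2; on
   that side, putting back y1 (resp. y2) still gives a proper subset, and the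
   other side is a proper subset too, so both extend to minimum covers and the
   side containing y1 (resp. y2) covers the new edge. *)
Lemma join_minimal :
  minimal_blocking e1 Y1 -> minimal_blocking e2 Y2 ->
  forall Z : {set T1 + T2}, Z \proper glue (Y1 :\ y1) (Y2 :\ y2) -> ~ blocking e Z.
Proof.
move=> mb1 mb2 Z; rewrite -(glueK Z) proper_glue.
case/and3P=> sub1 sub2 /orP [prop1 | prop2].
- have [C1 min1 subC1] := minimal_blocking_proper mb1 (proper_setU1 y1Y1 prop1).
  have [C2 min2 subC2] :=
    minimal_blocking_proper mb2 (sub_proper_trans sub2 (properD1 y2Y2)).
  apply: (glue_not_blocking min1 min2 _ (subset_trans (subsetUr _ _) subC1) subC2).
  by rewrite (subsetP subC1) ?setU11.
- have [C2 min2 subC2] := minimal_blocking_proper mb2 (proper_setU1 y2Y2 prop2).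
  have [C1 min1 subC1] :=
    minimal_blocking_proper mb1 (sub_proper_trans sub1 (properD1 y1Y1)).
  apply: (glue_not_blocking min1 min2 _ subC1 (subset_trans (subsetUr _ _) subC2)).
  by rewrite (subsetP subC2) ?setU11 ?orbT.
Qed.

End AdditiveOPT.
End JoinEdge.

Theorem mainTheorem15 (T1 T2 : finType) (e1 : rel T1) (e2 : rel T2)
  (G1 : simple_graph e1) (G2 : simple_graph e2)
  (Y1 : {set T1}) (Y2 : {set T2}) (y1 : T1) (y2 : T2)
  (hY1 : minimal_blocking e1 Y1) (hY1size : 2 <= #|Y1|)
  (hY2 : minimal_blocking e2 Y2)
  (hy1 : y1 \in Y1) (hy2 : y2 \in Y2) :
  OPT (join_edge e1 e2 y1 y2) = OPT e1 + OPT e2 /\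
  minimal_blocking (join_edge e1 e2 y1 y2)
    (((@inl T1 T2) @: Y1 :|: (@inr T1 T2) @: Y2) :\: [set inl y1; inr y2]).
Proof.
have [C1 min1 y1C1] : exists2 C1, min_cover e1 C1 & y1 \in C1.
  have single_proper : [set y1] \proper Y1 by rewrite properEcard sub1set hy1 cards1.
  have [C1 min1] := minimal_blocking_proper hY1 single_proper.
  by rewrite sub1set; exists C1.
have OPT_add := OPT_join_edge e2 y2 min1 y1C1.
split=> //; rewrite -/(glue Y1 Y2) glue_setD1; split.
  exact: join_blocking hy1 hy2 hY1.1 hY2.1.
exact: join_minimal hY1 hY2.
Qed.
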